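(* There is an algorithm that, given a \textsc{2-Visits} instance $d_1\le\dots\le d_n$ whose deadlines are pairwise distinct, decides in $O(n)$ time whether a feasible schedule exists; moreover, if one exists, a feasible schedule can be constructed in $O(n)$ time.
   Context: \textsc{2-Visits}: given a non-decreasing sequence of $n$ positive integers (deadlines) $d_1\le \dots\le d_n$, decide whether there exists a schedule of length $2n$ (an assignment of one visit to each position $1,\dots,2n$) containing exactly two visits of each node $i\in[n]$, such that the first visit of $i$ is at position at most $d_i$ and the second visit of $i$ is at most $d_i$ positions after the first visit of $i$. Such a schedule is called feasible. *)

From mathcomp Require Import all_boot.
Set Implicit Arguments. Unset Strict Implicit. Unset Printing Implicit Defensive.

(** * 2-Visits instances and feasible schedules
    Nodes are 0-indexed: node i (0 <= i < n) has deadline [nth 0 d i].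
    A schedule is a sequence [s] of length 2n; position j of the paper
    (1-based) is entry [nth _ s (j-1)]. *)

Definition instance (d : seq nat) : Prop :=
  all (fun x => 0 < x) d /\ sorted leq d.

Definition distinct_deadlines (d : seq nat) : Prop := uniq d.

Definition first_visit (s : seq nat) (i : nat) : nat := (index i s).+1.
Definition second_visit (s : seq nat) (i : nat) : nat :=
  first_visit s i + (index i (drop (first_visit s i) s)).+1.

Definition feasible (d s : seq nat) : Prop :=
  size s = 2 * size d /\
  all (fun x => x < size d) s /\
  forall i, i < size d ->
    [/\ count_mem i s = 2,
        first_visit s i <= nth 0 d i &
        second_visit s i <= first_visit s i + nth 0 d i].

(** * Unit-cost RAM model (registers and memory hold naturals)
    Instructions (r, a, b are register indices, l a program label): *)
Inductive instr : Type :=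
| Const (r v : nat)
| Add (r a b : nat)
| Sub (r a b : nat)          (* R[r] := R[a] - R[b] (truncated) *)
| Ld (r a : nat)
| St (a b : nat)
| Jz (r l : nat)
| Jmp (l : nat)
| Halt.

Definition program := seq instr.

Record state := State { pc : nat; reg : nat -> nat; mem : nat -> nat }.

Definition upd (f : nat -> nat) (x v : nat) : nat -> nat :=
  fun y => if y == x then v else f y.

Definition halted (P : program) (st : state) : bool :=
  (size P <= pc st) ||
  (if nth Halt P (pc st) is Halt then true else false).

Definition step (P : program) (st : state) : state :=
  let: State p R M := st in
  if halted P st then st else
  match nth Halt P p with
  | Const r v => State p.+1 (upd R r v) M
  | Add r a b => State p.+1 (upd R r (R a + R b)) M
  | Sub r a b => State p.+1 (upd R r (R a - R b)) M
  | Ld r a => State p.+1 (upd R r (M (R a))) M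
  | St a b => State p.+1 R (upd M (R a) (R b))
  | Jz r l => if R r == 0 then State l R M else State p.+1 R M
  | Jmp l => State l R M
  | Halt => st
  end.

Definition run (P : program) (k : nat) (st : state) : state := iter k (step P) st.

Definition init_state (d : seq nat) : state :=
  State 0 (fun r => if r == 0 then size d else 0)
          (fun a => if a < size d then nth 0 d a else 0).

(* Output convention: on halting, R[0] = 1 means "feasible", R[0] = 0 means
   "infeasible"; when feasible, the schedule is in M[n], ..., M[3n-1]. *)
Definition output_schedule (d : seq nat) (st : state) : seq nat :=
  mkseq (fun j => mem st (size d + j)) (2 * size d).

From Pilot Require Import Defs.
From mathcomp Require Import all_boot zify.

(* The program runs a greedy: first visits go to the nodes in order of
   deadline, second visits in first-in first-out order.  At position p, with u
   the next node not yet visited and h the oldest node awaiting its second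
   visit, it visits u if d_u = p or if no node awaits a second visit, and
   otherwise visits h, failing if the deadline F_h + d_h of that second visit
   (F_i the position of the first visit of i) has passed.  Each position costs
   a bounded number of steps.
   If the greedy fails at h, then the first visit of h was forced, so
   e := F_h + d_h = 2 d_h.  The e positions up to e were all used, by first
   visits of exactly the nodes with d_i <= e and by at most h second visits.
   Hence the first visits of the nodes with d_i <= e together with the second
   visits of the h + 1 nodes with 2 d_i <= e exceed e, so they fit in no
   feasible schedule. *)

Set Implicit Arguments.
Unset Strict Implicit.
Unset Printing Implicit Defensive.

Lemma nth_first_visit (s : seq nat) i : i \in s -> nth 0 s (first_visit s i).-1 = i.
Proof. exact: nth_index. Qed.

Lemma first_visit_lt_second (s : seq nat) i : first_visit s i < second_visit s i.
Proof. by rewrite /second_visit addnS ltnS leq_addr. Qed.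

Lemma nth_second_visit (s : seq nat) i : 1 < count_mem i s ->
  nth 0 s (second_visit s i).-1 = i.
Proof.
move=> twice; have i_s : i \in s by rewrite -has_pred1 has_count; lia.
rewrite /second_visit /first_visit addnS /= -nth_drop nth_index //.
set a := index i s in twice *.
have i_take : i \notin take a s by apply/negP => /index_ltn; rewrite ltnn.
move: twice; rewrite -has_pred1 has_count.
rewrite -[s in count _ s](cat_take_drop a) (drop_nth 0) ?index_mem // nth_index //.
by rewrite count_cat (count_memPn i_take) /= eqxx.
Qed.

Lemma index_nth_first (s : seq nat) x j : j < size s -> nth 0 s j = x ->
  (forall k, k < j -> nth 0 s k != x) -> index x s = j.
Proof.
move=> js sj_x before; have x_s : x \in s by rewrite -sj_x mem_nth.
have := index_nth 0 js; rewrite sj_x leq_eqVlt => /orP[/eqP // | lt_j].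
by have := before _ lt_j; rewrite nth_index // eqxx.
Qed.

Lemma count_bound_feasible (d s : seq nat) T : feasible d s ->
  count (fun i => nth 0 d i <= T) (iota 0 (size d))
  + count (fun i => nth 0 d i + nth 0 d i <= T) (iota 0 (size d)) <= T.
Proof.
move=> [_ [_ fs]].
(* The first visits of the nodes with d_i <= T and the second visits of those
   with 2 d_i <= T take distinct positions in 1 .. T. *)
have twice i : i \in iota 0 (size d) -> 1 < count_mem i s.
  by rewrite mem_iota => /andP[_ /fs[-> _ _]].
have visited i : i \in iota 0 (size d) -> i \in s.
  by move=> /twice; rewrite -has_pred1 has_count; lia.
set early := [seq i <- iota 0 (size d) | nth 0 d i <= T].
set late := [seq i <- iota 0 (size d) | nth 0 d i + nth 0 d i <= T].
have -> : count (fun i => nth 0 d i <= T) (iota 0 (size d))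
          + count (fun i => nth 0 d i + nth 0 d i <= T) (iota 0 (size d))
          = size (map (first_visit s) early ++ map (second_visit s) late).
  by rewrite size_cat !size_map !size_filter.
rewrite -[T in _ <= T](size_iota 1); apply: uniq_leq_size.
- rewrite cat_uniq !map_inj_in_uniq ?filter_uniq ?iota_uniq //=; last first.
  + move=> i j; rewrite !mem_filter => /andP[_ /visited i_s] /andP[_ /visited j_s] e.
    by rewrite -(nth_first_visit i_s) e nth_first_visit.
  + move=> i j; rewrite !mem_filter => /andP[_ /twice i2] /andP[_ /twice j2] e.
    by rewrite -(nth_second_visit i2) e nth_second_visit.
  rewrite andbT; apply/hasPn => q /mapP[j]; rewrite mem_filter => /andP[_ j_d] {q}->.
  apply/mapP => -[i]; rewrite mem_filter => /andP[_ i_d] e.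
  have ij : j = i by rewrite -(nth_second_visit (twice j j_d)) e nth_first_visit // visited.
  by have := first_visit_lt_second s i; subst j; lia.
- move=> q; rewrite mem_cat mem_iota => /orP[] /mapP[i];
    rewrite mem_filter mem_iota => /andP[iT /andP[_ /fs[_ f1 f2]]] ->;
    move: f1 f2; rewrite /second_visit /first_visit; lia.
Qed.

Lemma feasible_of_visits (d s : seq nat) (F G : nat -> nat) :
  size s = 2 * size d -> all (fun x => x < size d) s ->
  (forall i, i < size d ->
     [/\ 0 < F i <= nth 0 d i, F i < G i <= F i + nth 0 d i, G i <= size s &
         forall j, j < size s -> (nth 0 s j == i) = (j.+1 == F i) || (j.+1 == G i)]) ->
  feasible d s.
Proof.
move=> size_s s_lt visits; split=> //; split=> // i /visits[F_i G_i G_s at_i].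
have at_F : nth 0 s (F i).-1 = i by apply/eqP; rewrite at_i; lia.
have at_G : nth 0 s (G i).-1 = i by apply/eqP; rewrite at_i; lia.
have first : first_visit s i = F i.
  rewrite /first_visit (@index_nth_first _ _ (F i).-1) //; try lia.
  by move=> k lt_k; rewrite at_i; lia.
have second : second_visit s i = G i.
  rewrite /second_visit first (@index_nth_first _ _ (G i - (F i).+1)).
  - lia.
  - rewrite size_drop; lia.
  - by rewrite nth_drop -[X in _ = X]at_G; congr nth; lia.
  - by move=> k lt_k; rewrite nth_drop at_i; lia.
split; rewrite ?first ?second; try lia.
rewrite -[s in count _ s](mkseq_nth 0) count_map -size_filter.
have /perm_size -> :
    perm_eq [seq j <- iota 0 (size s) | nth 0 s j == i] [:: (F i).-1; (G i).-1].
  apply: uniq_perm; rewrite ?filter_uniq ?iota_uniq //=; first by rewrite inE; lia.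
  by move=> j; rewrite mem_filter mem_iota !inE; case: (ltnP j (size s)) => [/at_i ->|]; lia.
by [].
Qed.

(* Registers: R1 = n, R5 = 2n, R6 = 3n, R10 = 1, R2 = p, R3 = h, R4 = u, and
   R7-R9 are scratch.  Memory: M[a] = d_a for a < n, M[n + j] is the node
   visited at position j + 1, and M[3n + i] = F_i + d_i.  Each line starts
   with the index of its first instruction. *)
Definition greedy_prog : program := [::
 (*  0 *) Const 10 1; Add 1 0 11; Add 5 1 1; Add 6 5 1; Const 2 1;
 (*  5 *) Defs.Sub 7 2 5; Jz 7 8; Jmp 36;
 (*  8 *) Defs.Sub 7 1 4; Jz 7 13; Ld 8 4; Defs.Sub 7 8 2; Jz 7 26;
 (* 13 *) Defs.Sub 7 4 3; Jz 7 26;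
 (* 15 *) Add 7 6 3; Ld 8 7; Defs.Sub 9 2 8; Jz 9 20; Jmp 38;
 (* 20 *) Add 7 1 2; Defs.Sub 7 7 10; St 7 3; Add 3 3 10; Add 2 2 10; Jmp 5;
 (* 26 *) Ld 8 4; Add 8 8 2; Add 7 6 4; St 7 8; Add 7 1 2; Defs.Sub 7 7 10;
 (* 32 *) St 7 4; Add 4 4 10; Add 2 2 10; Jmp 5;
 (* 36 *) Const 0 1; Halt; Const 0 0; Halt].

Arguments run : simpl never.

Lemma run0 P st : run P 0 st = st.
Proof. by []. Qed.

Lemma run_step P k st st' : run P k (step P st) = st' -> run P k.+1 st = st'.
Proof. by rewrite /run iterSr. Qed.

Lemma run_add P a b st : run P (a + b) st = run P b (run P a st).
Proof. by rewrite /run addnC iterD. Qed.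

Ltac rewrite_facts :=
  repeat match goal with
  | H : ?l = _ |- context [?l] => rewrite H
  | H : is_true ?l |- context [?l] => rewrite H
  end.

Ltac exec_step :=
  apply: run_step; rewrite [step _ _]/= /upd /= ?subn_eq0 ?leqnn; rewrite_facts.

(* Executes the program symbolically until it reaches the state prescribed by
   the goal; the number of steps is an evar instantiated along the way. *)
Ltac exec := exec_step; repeat first [exact: run0 | exec_step].

Ltac check_regs := by split=> //; split=> /=; rewrite_facts; rewrite ?addn0 ?addn1.

Definition loop_regs (R : nat -> nat) (n p h u : nat) : Prop :=
  [/\ R 1 = n, R 5 = n + n, R 6 = n + n + n, R 10 = 1 & [/\ R 2 = p, R 3 = h & R 4 = u]].

Lemma exec_init d :
  exists k R, run greedy_prog k (init_state d) = State 5 R (Defs.mem (init_state d))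
              /\ loop_regs R (size d) 1 0 0 /\ k <= 5.
Proof. by do 2 eexists; split; [rewrite /init_state; exec | check_regs]. Qed.

Lemma exec_done n p h u R M : loop_regs R n p h u -> n + n < p ->
  exists k R', run greedy_prog k (State 5 R M) = State 37 R' M /\ R' 0 = 1 /\ k <= 19.
Proof.
move=> [R1 R5 R6 R10 [R2 R3 R4]] /ltn_geF p_gt.
by do 2 eexists; split; first exec.
Qed.

Lemma exec_push n p h u R M : loop_regs R n p h u -> p <= n + n -> u < n -> M u <= p \/ u = h ->
  exists k R', run greedy_prog k (State 5 R M)
                 = State 5 R' (upd (upd M (n + n + n + u) (M u + p)) (n + p - 1) u)
               /\ loop_regs R' n p.+1 h u.+1 /\ k <= 19.
Proof.
move=> [R1 R5 R6 R10 [R2 R3 R4]] p_le u_n forced; have n_u := ltn_geF u_n.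
case: (leqP (M u) p) => [Mu_le | /ltn_geF Mu_gt].
  by do 2 eexists; split; [exec | check_regs].
have {forced} h_u : h = u by case: forced => //; rewrite Mu_gt.
by subst h; do 2 eexists; split; [exec | check_regs].
Qed.

Lemma exec_pop n p h u R M : loop_regs R n p h u -> p <= n + n -> h < u ->
  (u < n -> p < M u) -> p <= M (n + n + n + h) ->
  exists k R', run greedy_prog k (State 5 R M) = State 5 R' (upd M (n + p - 1) h)
               /\ loop_regs R' n p.+1 h.+1 u /\ k <= 19.
Proof.
move=> [R1 R5 R6 R10 [R2 R3 R4]] p_le /ltn_geF u_h u_late due.
case: (ltnP u n) => [u_n | n_u].
  have n_u := ltn_geF u_n; have Mu_gt := ltn_geF (u_late u_n).
  by do 2 eexists; split; [exec | check_regs].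
by do 2 eexists; split; [exec | check_regs].
Qed.

Lemma exec_fail n p h u R M : loop_regs R n p h u -> p <= n + n -> h < u ->
  (u < n -> p < M u) -> M (n + n + n + h) < p ->
  exists k R', run greedy_prog k (State 5 R M) = State 39 R' M /\ R' 0 = 0 /\ k <= 19.
Proof.
move=> [R1 R5 R6 R10 [R2 R3 R4]] p_le /ltn_geF u_h u_late /ltn_geF late.
case: (ltnP u n) => [u_n | n_u].
  have n_u := ltn_geF u_n; have Mu_gt := ltn_geF (u_late u_n).
  by do 2 eexists; split; first exec.
by do 2 eexists; split; first exec.
Qed.

Lemma upd_eq (f : nat -> nat) x v y : y = x -> upd f x v y = v.
Proof. by move=> ->; rewrite /upd eqxx. Qed.

Lemma upd_neq (f : nat -> nat) x v y : y <> x -> upd f x v y = f y.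
Proof. by move=> /eqP yx; rewrite /upd (negbTE yx). Qed.

Ltac simpl_upd :=
  repeat first [rewrite upd_eq; last by lia | rewrite upd_neq; last by lia].

Lemma count_iota_all (P : pred nat) m : (forall i, i < m -> P i) -> count P (iota 0 m) = m.
Proof.
move=> allP_; apply/eqP; rewrite -[m in _ == m](size_iota 0) -all_count.
by apply/allP => i; rewrite mem_iota => /andP[_ /allP_].
Qed.

Lemma count_iota_upd (F : nat -> nat) m v t :
  count (fun i => upd F m v i <= t) (iota 0 m.+1)
  = count (fun i => F i <= t) (iota 0 m) + (v <= t).
Proof.
rewrite -addn1 iotaD count_cat /= upd_eq // addn0; congr (_ + _).
by apply: eq_in_count => i; rewrite mem_iota => /andP[_ lt_i]; rewrite upd_neq //; lia.
Qed.

Lemma count_le_succ (F : nat -> nat) s t :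
  count (fun i => F i <= t.+1) s = count (fun i => F i <= t) s + count (fun i => F i == t.+1) s.
Proof. by elim: s => //= i s ->; case: (ltngtP (F i) t.+1); lia. Qed.

Definition visits_by (u h : nat) (F G : nat -> nat) (t : nat) : nat :=
  count (fun i => F i <= t) (iota 0 u) + count (fun i => G i <= t) (iota 0 h).

Section Greedy.

Variable d : seq nat.
Hypothesis d_lt : forall i j, i < j -> j < size d -> nth 0 d i < nth 0 d j.
Local Notation n := (size d).

(* A node visited
   before its deadline was visited when nobody awaited a second visit, so it
   is h (whose deadline is then still ahead) or has already been served. *)
Record greedy_inv (p h u : nat) (F G : nat -> nat) : Prop := GreedyInv {
  inv_h_le_u : h <= u;
  inv_u_le_n : u <= n;
  inv_p : p = u + h + 1;
  inv_first : forall i, i < u -> 0 < F i <= nth 0 d i /\ F i < p;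
  inv_second : forall i, i < h -> F i < G i < p /\ G i <= F i + nth 0 d i;
  inv_visits : forall t, t < p -> visits_by u h F G t = t;
  inv_next : u < n -> p <= nth 0 d u;
  inv_early : forall i, i < u -> F i < nth 0 d i -> i < h \/ i = h /\ p <= nth 0 d i }.

Lemma greedy_init : all (fun x => 0 < x) d -> greedy_inv 1 0 0 (fun=> 0) (fun=> 0).
Proof.
move=> d_pos; split=> //.
- by move=> t; rewrite ltnS leqn0 => /eqP ->.
- by move=> n_pos; apply: (allP d_pos); rewrite mem_nth.
Qed.

Lemma greedy_push p h u F G : greedy_inv p h u F G -> u < n -> nth 0 d u <= p \/ u = h ->
  greedy_inv p.+1 h u.+1 (upd F u p) G.
Proof.
case=> hu un -> first second visits next early lt_u forced.
have d_u := next lt_u.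
split; try lia.
- move=> i lt_i; case: (ltngtP i u) => [i_u | | ->]; simpl_upd; try lia.
  by have := first i i_u; lia.
- by move=> i i_h; simpl_upd; have := second i i_h; lia.
- move=> t; rewrite ltnS leq_eqVlt => /orP[/eqP -> | t_p].
  + rewrite /visits_by !count_iota_all; try lia.
    * by move=> i i_h; have := second i i_h; lia.
    * move=> i lt_i; case: (ltngtP i u) => [i_u | | ->]; simpl_upd; try lia.
      by have := first i i_u; lia.
  + by move: (visits t t_p); rewrite /visits_by count_iota_upd; lia.
- by move=> u1n; have := d_lt (ltnSn u) u1n; lia.
- move=> i lt_i; case: (ltngtP i u) => [i_u | | ->]; simpl_upd; try lia.
  + move=> /(early i i_u) [|[i_h d_h]]; first by left.
    by subst i; have := d_lt i_u lt_u; case: forced; lia.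
Qed.

Lemma greedy_pop p h u F G : greedy_inv p h u F G -> h < u ->
  (u < n -> p < nth 0 d u) -> p <= F h + nth 0 d h ->
  greedy_inv p.+1 h.+1 u F (upd G h p).
Proof.
case=> hu un -> first second visits next early h_u u_late due.
have [F_h_pos F_h_lt] := first h h_u.
split; try lia.
- by move=> i i_u; have := first i i_u; lia.
- move=> i lt_i; case: (ltngtP i h) => [i_h | | ->]; simpl_upd; try lia.
  by have := second i i_h; lia.
- move=> t; rewrite ltnS leq_eqVlt => /orP[/eqP -> | t_p].
  + rewrite /visits_by !count_iota_all; try lia.
    * move=> i lt_i; case: (ltngtP i h) => [i_h | | ->]; simpl_upd; try lia.
      by have := second i i_h; lia.
    * by move=> i i_u; have := first i i_u; lia.
  + by move: (visits t t_p); rewrite /visits_by count_iota_upd; lia.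
- by move=> i i_u /(early i i_u); lia.
Qed.

Lemma greedy_visit_at p h u F G t : greedy_inv p h u F G -> 0 < t < p ->
  exists i, i < u /\ F i = t \/ i < h /\ G i = t.
Proof.
case=> _ _ _ _ _ visits _ _; case: t => // t /andP[_ t_p].
move: (visits t.+1 t_p) (visits t (ltnW t_p)); rewrite /visits_by !count_le_succ.
case: (boolP (has (fun i => F i == t.+1) (iota 0 u))) => [/hasP[i] | ].
  by rewrite mem_iota => /andP[_ i_u] /eqP F_i; exists i; left.
case: (boolP (has (fun i => G i == t.+1) (iota 0 h))) => [/hasP[i] | ].
  by rewrite mem_iota => /andP[_ i_h] /eqP G_i; exists i; right.
rewrite !has_count; lia.
Qed.

Lemma greedy_stuck p h u F G s : greedy_inv p h u F G -> h < u ->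
  (u < n -> p < nth 0 d u) -> F h + nth 0 d h < p -> ~ feasible d s.
Proof.
case=> hu un -> first second visits next early h_u u_late late feas.
set e := F h + nth 0 d h in late; have e_def : e = F h + nth 0 d h by []; clearbody e.
have [F_h_pos F_h_lt] := first h h_u.
have forced_h : F h = nth 0 d h.
  by case: (ltngtP (F h) (nth 0 d h)) => [/(early h h_u) | | //]; lia.
have firsts : count (fun i => F i <= e) (iota 0 u) = count (fun i => nth 0 d i <= e) (iota 0 n).
  rewrite -(subnKC un) iotaD count_cat add0n.
  rewrite [X in _ = _ + X](@eq_in_count _ _ pred0) ?count_pred0 ?addn0; last first.
    move=> i; rewrite mem_iota => /andP[u_i i_n] /=; apply/negbTE; rewrite -ltnNge.
    case: (ltngtP u i) => [/d_lt u_i' | | <-]; have := u_late; lia.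
  apply: eq_in_count => i; rewrite mem_iota => /andP[_ i_u].
  have [F_i_pos F_i_lt] := first i i_u.
  case: (ltngtP (F i) (nth 0 d i)) => [lt_i | | ->] //; last lia.
  case: (early i i_u lt_i) => [i_h | [i_h _]]; last by subst i; lia.
  by have := d_lt i_h (leq_trans h_u un); move=> ?; apply/idP/idP => _; lia.
have seconds : h.+1 <= count (fun i => nth 0 d i + nth 0 d i <= e) (iota 0 n).
  rewrite -(subnKC (leq_trans h_u un)) iotaD count_cat count_iota_all; first lia.
  move=> j; rewrite ltnS leq_eqVlt => /orP[/eqP -> | j_h]; first lia.
  have := @d_lt j h j_h; lia.
have := count_bound_feasible e feas; have := visits e late.
have := count_size (fun i => G i <= e) (iota 0 h).
by rewrite /visits_by firsts size_iota; lia.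
Qed.

Record mem_inv (h u : nat) (F G : nat -> nat) (M : nat -> nat) : Prop := MemInv {
  mem_deadline : forall a, a < n -> M a = nth 0 d a;
  mem_first : forall i, i < u -> M (n + (F i).-1) = i;
  mem_due : forall i, i < u -> M (n + n + n + i) = F i + nth 0 d i;
  mem_second : forall i, i < h -> M (n + (G i).-1) = i }.

Lemma mem_init F G : mem_inv 0 0 F G (Defs.mem (init_state d)).
Proof. by split=> // a /= ->. Qed.

Lemma mem_push p h u F G M : greedy_inv p h u F G -> mem_inv h u F G M -> u < n ->
  mem_inv h u.+1 (upd F u p) G (upd (upd M (n + n + n + u) (M u + p)) (n + p - 1) u).
Proof.
case=> hu _ -> first second _ _ _ [deadline mfirst due msecond] u_n.
split.
- by move=> a a_n; simpl_upd; apply: deadline.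
- move=> i lt_i; case: (ltngtP i u) => [i_u | | ->]; try lia.
  + have F_i := first i i_u; rewrite [upd F _ _ _]upd_neq; last lia.
    by simpl_upd; apply: mfirst.
  + by rewrite [upd F _ _ _]upd_eq //; simpl_upd.
- move=> i lt_i; case: (ltngtP i u) => [i_u | | ->]; try lia.
  + by rewrite [upd F _ _ _]upd_neq; simpl_upd; try lia; apply: due.
  + by rewrite [upd F _ _ _]upd_eq //; simpl_upd; rewrite deadline // addnC.
- move=> i i_h; have F_i := first i (leq_trans i_h hu); have G_i := second i i_h.
  by simpl_upd; apply: msecond.
Qed.

Lemma mem_pop p h u F G M : greedy_inv p h u F G -> mem_inv h u F G M -> h < u ->
  mem_inv h.+1 u F (upd G h p) (upd M (n + p - 1) h).
Proof.
case=> hu un -> first second _ _ _ [deadline mfirst due msecond] h_u.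
split.
- by move=> a a_n; simpl_upd; apply: deadline.
- by move=> i i_u; have F_i := first i i_u; simpl_upd; apply: mfirst.
- by move=> i i_u; simpl_upd; apply: due.
- move=> i lt_i; case: (ltngtP i h) => [i_h | | ->]; try lia.
  + have F_i := first i (leq_trans i_h hu); have G_i := second i i_h.
    by rewrite [upd G _ _ _]upd_neq; simpl_upd; try lia; apply: msecond.
  + by rewrite [upd G _ _ _]upd_eq //; simpl_upd.
Qed.

Lemma greedy_complete p h u F G M : greedy_inv p h u F G -> mem_inv h u F G M ->
  p = n + n + 1 -> feasible d (mkseq (fun j => M (n + j)) (2 * n)).
Proof.
move=> inv [_ mfirst _ msecond] p_end.
case: (inv) => hu un p_eq first second _ _ _.
have u_n : u = n by lia.
have h_n : h = n by lia.
subst u h.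
have node_at j : j < 2 * n -> exists2 i, i < n & (j.+1 = F i \/ j.+1 = G i) /\ M (n + j) = i.
  move=> j_lt; have /(greedy_visit_at inv)[i [[i_n F_i] | [i_n G_i]]] : 0 < j.+1 < p by lia.
  + by exists i => //; split; [left | rewrite (_ : n + j = n + (F i).-1) ?mfirst //; lia].
  + by exists i => //; split; [right | rewrite (_ : n + j = n + (G i).-1) ?msecond //; lia].
apply: (@feasible_of_visits _ _ F G); first by rewrite size_mkseq.
- apply/allP => x /mapP[j]; rewrite mem_iota => /andP[_ j_lt] {x}->.
  by have [i i_n [_ ->]] := node_at j j_lt.
- move=> i i_n; have F_i := first i i_n; have G_i := second i i_n.
  rewrite size_mkseq; split; try lia.
  move=> j j_lt; rewrite nth_mkseq //; have [k k_n [pos M_j]] := node_at j j_lt.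
  rewrite M_j; apply/idP/idP => [/eqP k_i | /orP[] /eqP pos_i].
  + by rewrite -k_i; case: pos => <-; rewrite eqxx ?orbT.
  + by rewrite -M_j (_ : n + j = n + (F i).-1) ?mfirst //; lia.
  + by rewrite -M_j (_ : n + j = n + (G i).-1) ?msecond //; lia.
Qed.

Definition solves (P : program) (d : seq nat) (st : state) : Prop :=
  halted P st /\
  (reg st 0 = 1 /\ feasible d (output_schedule d st)
   \/ reg st 0 = 0 /\ forall s, ~ feasible d s).

Lemma greedy_prog_loop m p h u F G R M : n + n + 1 - p = m ->
  greedy_inv p h u F G -> mem_inv h u F G M -> loop_regs R n p h u ->
  exists k, k <= 19 * m.+1 /\ solves greedy_prog d (run greedy_prog k (State 5 R M)).
Proof.
elim: m p h u F G R M => [|m IH] p h u F G R M m_def inv mem regs;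
  have [hu un p_eq first _ _ _ _] := inv; have [deadline _ due _] := mem.
  have p_gt : n + n < p by lia.
  have [k [R' [run_k [R'0 k_le]]]] := exec_done M regs p_gt.
  exists k; rewrite run_k; split; first lia.
  by split=> //; left; split=> //; apply: greedy_complete inv mem _; lia.
have p_le : p <= n + n by lia.
have m_next : n + n + 1 - p.+1 = m by lia.
have [/andP[u_n forced] | not_forced] := boolP ((u < n) && ((nth 0 d u <= p) || (u == h))).
  have {}forced : nth 0 d u <= p \/ u = h by case/orP: forced => [|/eqP]; [left | right].
  have M_forced : M u <= p \/ u = h by rewrite deadline.
  have [k1 [R1 [run1 [regs1 k1_le]]]] := exec_push regs p_le u_n M_forced.
  have [k2 [k2_le sol]] := IH _ _ _ _ _ _ _ m_next
    (greedy_push inv u_n forced) (mem_push inv mem u_n) regs1.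
  by exists (k1 + k2); rewrite run_add run1; split; first lia.
have h_u : h < u.
  rewrite ltn_neqAle hu andbT; apply: contra not_forced => /eqP <-.
  by rewrite eqxx orbT andbT; lia.
have M_late : u < n -> p < M u.
  by move=> u_n; move: not_forced; rewrite u_n /= negb_or -ltnNge deadline => // /andP[].
have d_late : u < n -> p < nth 0 d u by move=> u_n; rewrite -deadline ?M_late.
have [due_h | late_h] := leqP p (F h + nth 0 d h).
  have M_due : p <= M (n + n + n + h) by rewrite due.
  have [k1 [R1 [run1 [regs1 k1_le]]]] := exec_pop regs p_le h_u M_late M_due.
  have [k2 [k2_le sol]] := IH _ _ _ _ _ _ _ m_next
    (greedy_pop inv h_u d_late due_h) (mem_pop inv mem h_u) regs1.
  by exists (k1 + k2); rewrite run_add run1; split; first lia.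
have M_late_h : M (n + n + n + h) < p by rewrite due.
have [k [R' [run_k [R'0 k_le]]]] := exec_fail regs p_le h_u M_late M_late_h.
exists k; rewrite run_k; split; first lia.
by split=> //; right; split=> // s; apply: greedy_stuck inv h_u d_late late_h.
Qed.

End Greedy.

Theorem theorem3 :
  exists (P : program) (c : nat),
    forall d : seq nat, instance d -> distinct_deadlines d ->
      exists k, k <= c * size d + c /\
        let st := run P k (init_state d) in
        [/\ halted P st,
            reg st 0 \in [:: 0; 1],
            reg st 0 = 1 <-> (exists s, feasible d s) &
            reg st 0 = 1 -> feasible d (output_schedule d st)].
Proof.
exists greedy_prog, 40 => d [d_pos d_sorted] d_uniq.
have d_lt i j : i < j -> j < size d -> nth 0 d i < nth 0 d j.
  have d_ltn : sorted ltn d by rewrite ltn_sorted_uniq_leq d_uniq d_sorted.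
  by move=> ij j_n; apply: (sorted_ltn_nth ltn_trans 0 d_ltn) => //; rewrite inE; lia.
have [k1 [R [run1 [regs k1_le]]]] := exec_init d.
have [k2 [k2_le [halt verdict]]] := greedy_prog_loop d_lt (erefl _) (greedy_init d_pos)
                                     (mem_init d (fun=> 0) (fun=> 0)) regs.
exists (k1 + k2); split; first lia.
rewrite run_add run1; split=> //; case: verdict => [[-> feas] | [-> infeas]] //.
- by split=> // _; eexists; exact: feas.
- by split=> // -[s /infeas].
Qed.
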